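(* Let $\boldsymbol{\mathcal V}(x)=\sum_{n\ge0}x^n\sum_{r\in\mathcal V_n}\overline{\d}(r)$. Then \[ \boldsymbol{\mathcal V}=2x\boldsymbol{\mathcal V}+2x^2\boldsymbol{\mathcal M}(x,1)\mathcal V+2x^2\mathcal M(x,1)\boldsymbol{\mathcal V}+2x^2\mathcal V\,\tfrac{\partial}{\partial x}\big(x\mathcal M(x,1)\big)+2x\boldsymbol{\mathcal N}+2x\,\tfrac{\partial}{\partial x}\big(x\mathcal N\big), \] and explicitly \[ \boldsymbol{\mathcal V}(x)=\frac{8x\left(1+\sqrt{1-4x}-x\big(3+\sqrt{1-4x}\big)\right)}{(1-4x)\big(1-4x+\sqrt{1-4x}\big)^3}. \]
   Context: Steps: $U=(1,1)$, $D=(1,-1)$, two distinguishable copies $O_1,O_2$ of $(1,0)$. $\mathcal V_n$: paths starting at $(0,0)$ with $n$ steps in $\{U,D,O_1,O_2\}$, ending anywhere; $\mathcal N_n\subseteq\mathcal V_n$: those staying weakly above the $x$-axis. For a path $r$ with heights $r_0=0,\dots,r_n$, $\overline{\d}(r)=\sum_{i=0}^n|r_i|$. $\mathcal V(x)=\sum|\mathcal V_n|x^n$, $\mathcal N(x)=\sum|\mathcal N_n|x^n$, $\boldsymbol{\mathcal N}(x)=\sum_n x^n\sum_{r\in\mathcal N_n}\overline{\d}(r)$; $\mathcal M(x,1)$ and $\boldsymbol{\mathcal M}(x,1)$ are the generating functions by length, respectively unweighted and weighted by $\overline{\d}$, of paths in $\bigcup_n\mathcal N_n$ that end on the $x$-axis.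 *)

From mathcomp Require Import all_boot all_order all_algebra.
Set Implicit Arguments. Unset Strict Implicit. Unset Printing Implicit Defensive.
Import GRing.Theory Num.Theory.

(* The four steps: U = (1,1), D = (1,-1), O1, O2 two copies of (1,0). *)
Inductive step := U | D | O1 | O2.

Definition all_steps : seq step := [:: U; D; O1; O2].

Definition dh (s : step) : int :=
  match s with U => 1%Z | D => (-1)%Z | _ => 0%Z end.

Definition hgt (p : seq step) : int := \sum_(s <- p) dh s.

Fixpoint paths (n : nat) : seq (seq step) :=
  match n with
  | 0 => [:: [::]]
  | m.+1 => [seq s :: p | s <- all_steps, p <- paths m]
  end.

Definition heights (p : seq step) : seq int :=
  [seq hgt (take i p) | i <- iota 0 (size p).+1].

Definition dbar (p : seq step) : nat := \sum_(h <- heights p) `|h|%N.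

Definition nonneg (p : seq step) : bool := all (fun h => 0 <= h)%R (heights p).

Definition ends0 (p : seq step) : bool := hgt p == 0%R.

(* coefficient sequences of the generating functions *)
Definition Vc (n : nat) : nat := size (paths n).
Definition Vb (n : nat) : nat := \sum_(p <- paths n) dbar p.
Definition Nc (n : nat) : nat := count nonneg (paths n).
Definition Nb (n : nat) : nat := \sum_(p <- paths n | nonneg p) dbar p.
Definition Mc (n : nat) : nat := count (fun p => nonneg p && ends0 p) (paths n).
Definition Mb (n : nat) : nat := \sum_(p <- paths n | nonneg p && ends0 p) dbar p.

Definition fps := nat -> nat.
Definition fmul (f g : fps) : fps := fun n => \sum_(k < n.+1) f k * g (n - k).
Definition xmul (f : fps) : fps := fun n => if n is m.+1 then f m else 0.
(* coefficients of d/dx (x * f) *)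
Definition dx_x (f : fps) : fps := fun n => n.+1 * f n.

From HB Require Import structures.
From mathcomp Require Import all_boot all_order all_algebra zify.
Set Implicit Arguments. Unset Strict Implicit. Unset Printing Implicit Defensive.
Import Order.TTheory GRing.Theory Num.Theory.

(* Paths are read from an arbitrary starting height k through two
   accumulators, [above k p] (p started at k stays weakly above the axis) and
   [dbar_from k p] (the sum of its absolute heights); [nonneg] and [dbar] are
   the case k = 0.

   Split a path of length n+1 after its first step.
   By mirror symmetry the U- and D-started paths contribute equally, so
   Vb(n+1) = 2 Vb(n) + 2 sum_p dbar_from 1 p.  A path started at height 1
   either stays >= 1, and then its area is that of a nonnegative path plus
   n+1, or it has a unique first passage below height 1, p = q ++ D :: r with
   q a Motzkin path; these two cases give the N-terms and the convolutions.

   Split instead after the last step: Vb(n+1) = 4 Vb(n) + A(n+1)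
   with A(n) the sum of |final heights|, and A(n+1) = 4 A(n) + 2 C(2n,n) since
   final heights are binomially distributed.  Hence 3 Vb(n) = n(2n+1) C(2n,n),
   so G(x) = sum_n Vb(n+1) x^n has radius 1/4 and solves (1-4x) G' = 10 G;
   thus G(x) (1-4x)^(5/2) = G(0) = 2, and x G(x) is the announced expression. *)

Definition step_eqb (x y : step) : bool :=
  match x, y with U, U | D, D | O1, O1 | O2, O2 => true | _, _ => false end.
Lemma step_eqP : Equality.axiom step_eqb.
Proof. by case; case; constructor. Qed.
HB.instance Definition _ := hasDecEq.Build step step_eqP.

Fixpoint above (k : int) (p : seq step) : bool :=
  match p with
  | [::] => (0 <= k)%R
  | s :: p' => (0 <= k)%R && above (k + dh s)%R p'
  end.

Fixpoint dbar_from (k : int) (p : seq step) : nat :=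
  match p with
  | [::] => `|k|%N
  | s :: p' => (`|k|%N + dbar_from (k + dh s)%R p')%N
  end.

Lemma hgt_nil : hgt [::] = 0%R.
Proof. by rewrite /hgt big_nil. Qed.

Lemma hgt_cons s p : hgt (s :: p) = (dh s + hgt p)%R.
Proof. by rewrite /hgt big_cons. Qed.

Lemma heights_nil : heights [::] = [:: 0%R].
Proof. by rewrite /heights /= hgt_nil. Qed.

Lemma heights_cons s p :
  heights (s :: p) = 0%R :: [seq (dh s + h)%R | h <- heights p].
Proof.
rewrite /heights.
have -> : iota 0 (size (s :: p)).+1 = 0%N :: map (addn 1) (iota 0 (size p).+1).
  by rewrite -iotaDl.
rewrite map_cons take0 hgt_nil -!map_comp; congr (_ :: _).
by apply: eq_map => i /=; rewrite hgt_cons.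
Qed.

Lemma above_heights k p : all (fun h => 0 <= k + h)%R (heights p) = above k p.
Proof.
elim: p k => [|s p IH] k; first by rewrite heights_nil /= addr0 andbT.
rewrite heights_cons [above _ _]/= -IH; move: (heights p) => hs /=.
rewrite addr0 all_map; congr (_ && _).
by apply: eq_all => h /=; rewrite addrA.
Qed.

Lemma dbar_from_heights k p :
  (\sum_(h <- heights p) `|(k + h)%R|%N)%N = dbar_from k p.
Proof.
elim: p k => [|s p IH] k; first by rewrite heights_nil big_seq1 addr0.
rewrite heights_cons [dbar_from _ _]/= -IH; move: (heights p) => hs.
rewrite big_cons big_map addr0; congr (_ + _)%N.
by apply: eq_bigr => h _; rewrite addrA.
Qed.

Lemma nonnegE p : nonneg p = above 0 p.
Proof. by rewrite /nonneg -above_heights; apply: eq_all => h; rewrite add0r. Qed.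

Lemma dbarE p : dbar p = dbar_from 0 p.
Proof. by rewrite /dbar -dbar_from_heights; apply: eq_bigr => h _; rewrite add0r. Qed.

Lemma dbar_from_cat k q s r :
  dbar_from k (q ++ s :: r) = (dbar_from k q + dbar_from (k + hgt q + dh s)%R r)%N.
Proof.
elim: q k => [|s' q IH] k /=; first by rewrite hgt_nil addr0.
by rewrite IH hgt_cons !addrA addnA.
Qed.

Lemma dbar_from_lift k q :
  above k q -> dbar_from (k + 1)%R q = (dbar_from k q + (size q).+1)%N.
Proof.
elim: q k => [|s q IH] k /=; first lia.
move=> /andP[k_ge0 q_above]; rewrite addrAC IH //.
have -> : `|(k + 1)%R|%N = (`|k|%N + 1)%N by lia.
by rewrite -!addnA; congr (_ + _)%N; rewrite addnCA addnS.
Qed.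

Lemma VbE n : Vb n = (\sum_(p <- paths n) dbar_from 0 p)%N.
Proof. by apply: eq_bigr => p _; rewrite dbarE. Qed.

Lemma paths_S n : paths n.+1 = [seq s :: p | s <- all_steps, p <- paths n].
Proof. by []. Qed.

Lemma mem_paths n p : (p \in paths n) = (size p == n).
Proof.
elim: n p => [|n IH] p; first by case: p.
rewrite paths_S; apply/allpairsP/idP => [[[s q] [_ q_in ->]]|].
  by rewrite /= eqSS -IH.
case: p => [//|s q] q_size.
by exists (s, q); split => //; [case: s {q_size} | rewrite IH].
Qed.

Lemma uniq_paths n : uniq (paths n).
Proof.
elim: n => [|n IH] //; rewrite paths_S.
by apply: allpairs_uniq => // -[s p] [s' p'] _ _ /= [-> ->].
Qed.

Lemma sum_paths_first_step n (F : seq step -> nat) :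
  (\sum_(p <- paths n.+1) F p =
   \sum_(p <- paths n) (F (U :: p) + F (D :: p) + F (O1 :: p) + F (O2 :: p)))%N.
Proof.
rewrite paths_S big_allpairs_dep /all_steps !big_cons big_nil !big_split /=.
by rewrite addn0 !addnA.
Qed.

Lemma perm_paths_last_step n :
  perm_eq (paths n.+1) [seq rcons p s | p <- paths n, s <- all_steps].
Proof.
apply: uniq_perm; first exact: uniq_paths.
  apply: allpairs_uniq; [exact: uniq_paths | by [] |].
  by move=> [p s] [p' s'] _ _ /= /rcons_inj [-> ->].
move=> p; rewrite mem_paths; apply/idP/allpairsP => [|[[q s] /= [q_in _ ->]]].
  case/lastP: p => [//|q s]; rewrite size_rcons eqSS => q_size.
  by exists (q, s); split; [rewrite mem_paths | case: s |].
by move: q_in; rewrite mem_paths size_rcons.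
Qed.

Lemma sum_const_cond (I : Type) (r : seq I) (P : pred I) (c : nat) :
  (\sum_(i <- r | P i) c = c * count P r)%N.
Proof. by rewrite -sum1_count big_distrr /= muln1. Qed.

Lemma count_sum (I : Type) (P : pred I) (r : seq I) :
  count P r = (\sum_(i <- r) P i)%N.
Proof. by rewrite -sum1_count big_mkcond. Qed.

Definition mirror (s : step) : step := match s with U => D | D => U | s => s end.

Lemma mirrorK : involutive mirror.
Proof. by case. Qed.

Lemma dbar_from_mirror k p : dbar_from (- k)%R (map mirror p) = dbar_from k p.
Proof.
elim: p k => [|s p IH] k /=; first by rewrite abszN.
have dh_mirror : dh (mirror s) = (- dh s)%R by case: s.
by rewrite abszN dh_mirror -opprD IH.
Qed.

Lemma sum_paths_mirror n (F : seq step -> nat) :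
  (\sum_(p <- paths n) F (map mirror p) = \sum_(p <- paths n) F p)%N.
Proof.
have mirror_inj : injective (map mirror) by exact: can_inj (mapK mirrorK).
rewrite -(big_map (map mirror) xpredT F); apply: perm_big; apply: uniq_perm.
- by rewrite map_inj_uniq ?uniq_paths.
- exact: uniq_paths.
move=> p; rewrite -[p in LHS](mapK mirrorK) mem_map //.
by rewrite !mem_paths size_map.
Qed.

(* First-step decomposition: O1/O2 first steps reproduce Vb n, and the U and
   D first steps contribute the same by mirror symmetry. *)
Lemma Vb_first_step n :
  Vb n.+1 = (2 * (\sum_(p <- paths n) dbar_from 1%Z p) + 2 * Vb n)%N.
Proof.
rewrite VbE sum_paths_first_step.
under eq_bigr do rewrite /= !add0r !add0n.
rewrite !big_split /= -VbE.
have -> : (\sum_(p <- paths n) dbar_from (-1) p = \sum_(p <- paths n) dbar_from 1%Z p)%N.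
  by rewrite -sum_paths_mirror; apply: eq_bigr => p _; exact: (dbar_from_mirror 1).
lia.
Qed.

Definition motzkin (q : seq step) : bool := above 0 q && (hgt q == 0%R).

Lemma above_neg k r : (k < 0)%R -> above k r = false.
Proof. by case: r => [|s r] /= k_lt0; rewrite leNgt k_lt0. Qed.

Lemma above_cat_down k q r :
  above k q -> (k + hgt q = 0)%R -> above k (q ++ D :: r) = false.
Proof.
elim: q k => [|s q IH] k /=; first by rewrite hgt_nil addr0 => _ ->; rewrite above_neg.
by move=> /andP[_ q_above]; rewrite hgt_cons addrA => /(IH _ q_above) ->; rewrite andbF.
Qed.

Lemma first_passage_uniq k q q' r r' :
  above k q -> above k q' -> (k + hgt q = 0)%R -> (k + hgt q' = 0)%R ->
  q ++ D :: r = q' ++ D :: r' -> q = q' /\ r = r'.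
Proof.
elim: q k q' => [|s q IH] k [|s' q'] //=.
- by move=> _ _ _ _ [->].
- move=> _ /andP[_ q'_above] k0 _ [s'D _]; rewrite hgt_nil addr0 in k0.
  by rewrite k0 -s'D above_neg in q'_above.
- move=> /andP[_ q_above] _ _ k0 [sD _]; rewrite hgt_nil addr0 in k0.
  by rewrite k0 sD above_neg in q_above.
move=> /andP[_ q_above] /andP[_ q'_above]; rewrite !hgt_cons !addrA => hq hq' [ss' e]; subst s'.
by have [-> ->] := IH _ _ q_above q'_above hq hq' e.
Qed.

Lemma first_passage_exists k p : (0 <= k)%R -> ~~ above k p ->
  exists q r, [/\ above k q, (k + hgt q = 0)%R & p = q ++ D :: r].
Proof.
elim: p k => [|s p IH] k /= k_ge0; rewrite k_ge0 //=.
have [next_ge0 p_below|next_lt0 _] := lerP 0 (k + dh s).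
  have [q [r [q_above hq ->]]] := IH _ next_ge0 p_below.
  by exists (s :: q), r; rewrite /= k_ge0 hgt_cons addrA.
case: s next_lt0 => /= next_lt0; try (exfalso; lia).
by exists [::], p; rewrite hgt_nil; split => //; lia.
Qed.

Definition shorter_paths n : seq (seq step) := flatten [seq paths k | k <- iota 0 n].

Lemma mem_shorter_paths n p : (p \in shorter_paths n) = (size p < n)%N.
Proof.
apply/flatten_mapP/idP => [[k]|p_size].
  by rewrite mem_iota mem_paths => k_bound /eqP ->; lia.
by exists (size p); rewrite ?mem_iota ?mem_paths.
Qed.

Lemma uniq_shorter_paths n : uniq (shorter_paths n).
Proof.
elim: n => [|n IH] //.
rewrite /shorter_paths -addn1 iotaD map_cat flatten_cat /= cats0 -/(shorter_paths n).
rewrite cat_uniq IH uniq_paths andbT /=.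
by apply/hasPn => p; rewrite mem_paths mem_shorter_paths => /eqP ->; rewrite ltnn.
Qed.

Definition first_passage_paths n : seq (seq step) :=
  [seq q ++ D :: r | q <- [seq q <- shorter_paths n | motzkin q],
                     r <- paths (n.-1 - size q)].

Lemma perm_first_passage n :
  perm_eq (first_passage_paths n) [seq p <- paths n | ~~ above 0 p].
Proof.
apply: uniq_perm; last move=> p; rewrite ?filter_uniq ?uniq_paths //.
  apply: allpairs_uniq_dep; rewrite ?filter_uniq ?uniq_shorter_paths //.
    by move=> q _; exact: uniq_paths.
  move=> _ _ /allpairsPdep [q [r [+ _ ->]]] /allpairsPdep [q' [r' [+ _ ->]]] /= e.
  rewrite !mem_filter => /andP[/andP[q_above /eqP hq] _] /andP[/andP[q'_above /eqP hq'] _].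
  by have [-> ->] := first_passage_uniq q_above q'_above
    (etrans (add0r _) hq) (etrans (add0r _) hq') e.
rewrite mem_filter mem_paths.
apply/allpairsPdep/idP => [[q [r [+ + ->]]]|/andP[p_below /eqP p_size]].
  rewrite mem_filter mem_shorter_paths mem_paths => /andP[/andP[q_above /eqP hq] q_size] /eqP r_size.
  rewrite above_cat_down ?add0r //= size_cat /= r_size -subn1.
  by apply/eqP; move: q_size; move: (size q) => m; lia.
have [q [r [q_above hq p_eq]]] := first_passage_exists (lexx 0%R) p_below.
have split_size : size p = (size q + (size r).+1)%N by rewrite p_eq size_cat.
have [q_size r_size] : (size q < n)%N /\ size r = (n.-1 - size q)%N.
  rewrite -subn1; move: p_size split_size.
  by move: (size p) (size q) (size r) => lp lq lr; lia.
exists q, r; split => //.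
  by rewrite mem_filter mem_shorter_paths /motzkin q_above -hq add0r eqxx.
by rewrite mem_paths r_size.
Qed.

Lemma sum_first_passage n (F : seq step -> nat) :
  (\sum_(p <- paths n | ~~ above 0 p) F p =
   \sum_(k < n) \sum_(q <- paths k | motzkin q)
                \sum_(r <- paths (n.-1 - k)) F (q ++ D :: r))%N.
Proof.
rewrite -big_filter -(perm_big _ (perm_first_passage n)) big_allpairs_dep.
rewrite big_filter big_flatten big_map.
rewrite (_ : iota 0 n = index_iota 0 n) ?big_mkord; last by rewrite /index_iota subn0.
apply: eq_bigr => k _; rewrite big_seq_cond [RHS]big_seq_cond.
by apply: eq_bigr => q /andP[+ _]; rewrite mem_paths => /eqP ->.
Qed.

Lemma McE k : Mc k = count motzkin (paths k).
Proof. by apply: eq_count => q; rewrite nonnegE. Qed.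

Lemma MbE k : Mb k = (\sum_(q <- paths k | motzkin q) dbar_from 0 q)%N.
Proof. by apply: eq_big => q; [rewrite nonnegE | rewrite dbarE]. Qed.

Lemma NcE n : Nc n = count (above 0) (paths n).
Proof. by apply: eq_count => q; rewrite nonnegE. Qed.

Lemma NbE n : Nb n = (\sum_(p <- paths n | above 0 p) dbar_from 0 p)%N.
Proof. by apply: eq_big => q; [rewrite nonnegE | rewrite dbarE]. Qed.

(* A path started at height 1 either stays weakly above height 1 (area of a
   nonnegative path plus n+1), or is q ++ D :: r with q Motzkin: the prefix
   has area dbar q + |q| + 1, the suffix is an arbitrary path from 0. *)
Lemma sum_dbar_from_one n :
  (\sum_(p <- paths n) dbar_from 1%Z p = Nb n + n.+1 * Nc n +
   \sum_(k < n) (Mb k * Vc (n.-1 - k) + k.+1 * Mc k * Vc (n.-1 - k)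
                 + Mc k * Vb (n.-1 - k)))%N.
Proof.
rewrite (bigID (above 0)) /= sum_first_passage; congr (_ + _)%N.
  rewrite NbE NcE -sum_const_cond -big_split /=.
  rewrite big_seq_cond [RHS]big_seq_cond; apply: eq_bigr => p /andP[+ p_above].
  by rewrite mem_paths => /eqP p_size; rewrite -p_size -(dbar_from_lift p_above) add0r.
apply: eq_bigr => k _.
transitivity (\sum_(q <- paths k | motzkin q)
               ((dbar_from 0 q + k.+1) * Vc (n.-1 - k) + Vb (n.-1 - k)))%N.
  rewrite big_seq_cond [RHS]big_seq_cond.
  apply: eq_bigr => q /andP[+ /andP[q_above /eqP hq]]; rewrite mem_paths => /eqP q_size.
  under eq_bigr => r _ do rewrite dbar_from_cat hq.
  rewrite big_split /= -VbE sum_const_cond count_predT -/(Vc _).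
  by rewrite -q_size -(dbar_from_lift q_above) add0r.
rewrite big_split /= -big_distrl /= big_split /= !sum_const_cond -MbE -McE.
by rewrite mulnDl (mulnC (Vb _)) (mulnC k.+1).
Qed.

Lemma fmulC f g n : fmul f g n = fmul g f n.
Proof.
rewrite /fmul (reindex_inj rev_ord_inj) /=; apply: eq_bigr => k _.
by rewrite subSS subKn ?leq_ord // mulnC.
Qed.

Lemma xmul_fmulC f g n : xmul (fmul f g) n = xmul (fmul g f) n.
Proof. by case: n => [|n] //=; rewrite fmulC. Qed.

Lemma xmul_fmul f g n : xmul (fmul f g) n = (\sum_(k < n) f k * g (n.-1 - k))%N.
Proof. by case: n => [|n] //=; rewrite big_ord0. Qed.

Lemma Vb_functional_equation n : Vb n =
       (2 * xmul Vb n
        + 2 * xmul (xmul (fmul Mb Vc)) n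
        + 2 * xmul (xmul (fmul Mc Vb)) n
        + 2 * xmul (xmul (fmul Vc (dx_x Mc))) n
        + 2 * xmul Nb n
        + 2 * xmul (dx_x Nc) n)%N.
Proof.
case: n => [|n]; first by rewrite VbE big_seq1.
have xmul_S f m : xmul f m.+1 = f m by [].
rewrite !xmul_S (xmul_fmulC Vc) !xmul_fmul Vb_first_step sum_dbar_from_one !big_split /= /dx_x.
set A := \sum_(k < n) Mb k * Vc (n.-1 - k).
set B := \sum_(k < n) k.+1 * Mc k * Vc (n.-1 - k).
set C := \sum_(k < n) Mc k * Vb (n.-1 - k).
lia.
Qed.

Definition abs_height_sum n : nat := (\sum_(p <- paths n) `|hgt p|%N)%N.

Definition step_abs (h : int) : nat := (`|(h + 1)%R|%N + `|(h - 1)%R|%N + 2 * `|h|%N)%N.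

Lemma step_absE h : step_abs h = (4 * `|h|%N + 2 * (h == 0%R))%N.
Proof. rewrite /step_abs; lia. Qed.

(* Last-step decomposition: each path of length n is extended in four ways,
   each adding the new final height. *)
Lemma Vb_last_step n : Vb n.+1 = (4 * Vb n + \sum_(p <- paths n) step_abs (hgt p))%N.
Proof.
rewrite VbE (perm_big _ (perm_paths_last_step n)) big_allpairs_dep VbE big_distrr.
rewrite -big_split /=; apply: eq_bigr => p _; rewrite /all_steps !big_cons big_nil.
rewrite -!cats1 !dbar_from_cat /= !add0r /step_abs addr0.
have -> : (hgt p + 1 = hgt p + dh U)%R by [].
by move: (dbar_from 0 p) (hgt p) => a h /=; lia.
Qed.

Lemma abs_height_sum_S n :
  abs_height_sum n.+1 = (\sum_(p <- paths n) step_abs (hgt p))%N.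
Proof.
rewrite /abs_height_sum sum_paths_first_step; apply: eq_bigr => p _.
rewrite !hgt_cons /step_abs /= !add0r (addrC (-1)%R) addrC; lia.
Qed.

Lemma hgt_bound p : (- (size p)%:Z <= hgt p <= (size p)%:Z)%R.
Proof. by elim: p => [|s p IH]; rewrite ?hgt_nil ?hgt_cons //=; case: s => /=; lia. Qed.

Definition height_count n (j : nat) : nat :=
  count (fun p => hgt p + n%:Z == j%:Z)%R (paths n).

(* Final heights satisfy the recurrence of the coefficients of (1+x)^(2n):
   the step polynomial x^-1 + 2 + x is (1+x)^2 / x. *)
Lemma height_count_S n j : height_count n.+1 j =
  ((if j is j'.+2 then height_count n j' else 0) + height_count n j
   + 2 * (if j is j'.+1 then height_count n j' else 0))%N.
Proof.
rewrite /height_count count_sum sum_paths_first_step !count_sum.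
transitivity (\sum_(p <- paths n)
  ((if j is j'.+2 then (hgt p + n%:Z == j'%:Z)%R else 0) + (hgt p + n%:Z == j%:Z)%R
   + 2 * (if j is j'.+1 then (hgt p + n%:Z == j'%:Z)%R else 0)))%N.
  rewrite big_seq [RHS]big_seq; apply: eq_bigr => p; rewrite mem_paths => /eqP p_size.
  have := hgt_bound p; rewrite p_size !hgt_cons /=.
  by move: (hgt p) => h h_bound; case: j => [|[|j']] /=; lia.
rewrite !big_split /= -!count_sum.
have zero_sum c : (\sum_(p <- paths n) c)%N = (c * size (paths n))%N.
  by rewrite -sum1_size big_distrr /= muln1.
by case: j => [|[|j']] /=; rewrite ?zero_sum ?mul0n -?big_distrr -?count_sum.
Qed.

Lemma height_count_binomial n j : height_count n j = 'C(n.*2, j).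
Proof.
elim: n j => [|n IH] j; first by rewrite /height_count /= hgt_nil; case: j.
rewrite height_count_S doubleS.
case: j => [|[|j']] /=; rewrite !IH ?binS ?bin0 ?bin1; lia.
Qed.

Lemma count_returns n : count (fun p => hgt p == 0%R) (paths n) = 'C(n.*2, n).
Proof.
rewrite -height_count_binomial; apply: eq_count => p /=.
by apply/idP/idP => /eqP h; apply/eqP; lia.
Qed.

Lemma abs_height_sum_rec n : abs_height_sum n.+1 = (4 * abs_height_sum n + 2 * 'C(n.*2, n))%N.
Proof.
rewrite abs_height_sum_S; under eq_bigr do rewrite step_absE.
by rewrite big_split /= -!big_distrr /= -count_returns count_sum.
Qed.

Lemma central_binomial_S n : (n.+1 * 'C(n.+1.*2, n.+1) = (4 * n + 2) * 'C(n.*2, n))%N.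
Proof.
have diag := mul_bin_diag (n.+1.*2) n.
have down := mul_bin_down (n.*2.+1) n.
rewrite doubleS /= in diag *; rewrite -diag.
rewrite (_ : n.*2.+1 - n = n.+1)%N in down; last by lia.
move: down; move: 'C(n.*2.+1, n) 'C(n.*2, n) => c c' down.
have -> : (n.*2.+2 * c = 2 * (n.+1 * c))%N by lia.
rewrite -down; lia.
Qed.

Lemma abs_height_sum_closed n : abs_height_sum n = (n * 'C(n.*2, n))%N.
Proof.
elim: n => [|n IH]; first by rewrite /abs_height_sum /= big_seq1 hgt_nil.
by rewrite abs_height_sum_rec IH central_binomial_S; lia.
Qed.

Lemma Vb_closed n : (3 * Vb n = n * n.*2.+1 * 'C(n.*2, n))%N.
Proof.
elim: n => [|n IH]; first by rewrite VbE big_seq1.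
rewrite Vb_last_step -abs_height_sum_S abs_height_sum_closed mulnDr mulnA (mulnC 3 4).
rewrite -mulnA IH.
have -> : (n.+1 * n.+1.*2.+1 * 'C(n.+1.*2, n.+1)
           = n.+1.*2.+1 * (n.+1 * 'C(n.+1.*2, n.+1)))%N by lia.
by rewrite central_binomial_S; move: 'C(n.*2, n) => c; nia.
Qed.

Lemma Vb_rec n : (n.+1 * Vb n.+2 = (4 * n + 10) * Vb n.+1)%N.
Proof.
apply/eqP; rewrite -(eqn_pmul2l (isT : 0 < 3)%N) mulnCA [X in _ == X]mulnCA.
rewrite !Vb_closed; apply/eqP.
have -> : (n.+1 * (n.+2 * n.+2.*2.+1 * 'C(n.+2.*2, n.+2))
           = n.+1 * n.+2.*2.+1 * (n.+2 * 'C(n.+2.*2, n.+2)))%N by lia.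
by rewrite central_binomial_S; move: 'C(n.+1.*2, n.+1) => c; nia.
Qed.

Lemma Vb_gt0 n : (0 < Vb n.+1)%N.
Proof.
have := Vb_closed n.+1; have : (0 < 'C(n.+1.*2, n.+1))%N by rewrite bin_gt0; lia.
by move: 'C(n.+1.*2, n.+1) => c; nia.
Qed.

Lemma Vb0 : Vb 0 = 0%N.
Proof. by rewrite VbE big_seq1. Qed.

Lemma Vb1 : Vb 1 = 2%N.
Proof. by have := Vb_closed 1; rewrite bin1 /=; lia. Qed.

From Stdlib Require Import Reals Lra.
From Coquelicot Require Import Coquelicot.
Open Scope R_scope.

(* The coefficients of G(x) = sum_n Vb(n+1) x^n, so that V(x) = x G(x). *)
Definition vcoef (n : nat) : R := INR (Vb n.+1).

Lemma vcoef_rec n : (INR n + 1) * vcoef n.+1 = (4 * INR n + 10) * vcoef n.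
Proof.
have := f_equal INR (Vb_rec n); rewrite /vcoef !mult_INR plus_INR mult_INR S_INR.
rewrite (_ : INR 4 = 4); last by simpl; lra.
rewrite (_ : INR 10 = 10); last by simpl; lra.
lra.
Qed.

Lemma vcoef_gt0 n : 0 < vcoef n.
Proof. by apply: lt_0_INR; apply/ssrnat.ltP; exact: Vb_gt0. Qed.

Lemma vcoef0 : vcoef 0 = 2.
Proof. by rewrite /vcoef Vb1. Qed.

(* The ratio of consecutive coefficients is 4 + 6/(n+1), hence tends to 4. *)
Lemma vcoef_ratio : is_lim_seq (fun n => Rabs (vcoef n.+1 / vcoef n)) 4.
Proof.
apply: (is_lim_seq_ext (fun n => 4 + 6 * / INR n.+1)).
  move=> n; have := vcoef_rec n; have := vcoef_gt0 n.+1; have := vcoef_gt0 n.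
  move=> c_gt0 c'_gt0 rec; have := pos_INR n; rewrite Rabs_pos_eq => [n_ge0|].
  - rewrite S_INR; field_simplify_eq; [lra | split; lra].
  - by apply: Rmult_le_pos; [lra | apply/Rlt_le/Rinv_0_lt_compat; lra].
have inv_lim : is_lim_seq (fun n => / INR n.+1) 0.
  apply: (is_lim_seq_inv _ p_infty) => //.
  by apply/(is_lim_seq_incr_1 INR p_infty); exact: is_lim_seq_INR.
have scaled : is_lim_seq (fun n => 6 * / INR n.+1) 0.
  by have := is_lim_seq_scal_l _ 6 _ inv_lim; rewrite /= Rmult_0_r.
by have := is_lim_seq_plus' _ _ 4 0 (is_lim_seq_const 4) scaled; rewrite Rplus_0_r.
Qed.

Lemma vcoef_radius : CV_radius vcoef = Finite (/ 4).
Proof.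
apply: CV_radius_finite_DAlembert; last exact: vcoef_ratio; last lra.
by move=> n; have := vcoef_gt0 n; lra.
Qed.

Lemma vcoef_inside x : Rabs x < / 4 -> Rbar_lt (Rabs x) (CV_radius vcoef).
Proof. by rewrite vcoef_radius. Qed.

Lemma vcoef_derive_inside x :
  Rabs x < / 4 -> Rbar_lt (Rabs x) (CV_radius (PS_derive vcoef)).
Proof. by rewrite CV_radius_derive vcoef_radius. Qed.

(* Coefficientwise form of the differential equation (1 - 4x) G' = 10 G. *)
Lemma vcoef_ode_coef n :
  PS_minus (PS_derive vcoef) (PS_scal 4 (PS_incr_1 (PS_derive vcoef))) n
  = PS_scal 10 vcoef n.
Proof.
rewrite /PS_minus /PS_scal /PS_incr_1 /PS_derive /plus /opp /scal /mult /zero /=.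
rewrite /mult /zero /=; case: n => [|n].
  by have := vcoef_rec 0; rewrite /=; lra.
change (match n with 0%N => 1 | _.+1 => INR n + 1 end) with (INR n.+1).
by have := vcoef_rec n.+1; nra.
Qed.

Lemma vcoef_ode x :
  Rabs x < / 4 -> (1 - 4 * x) * PSeries (PS_derive vcoef) x = 10 * PSeries vcoef x.
Proof.
move=> x_in.
have G' := PSeries_correct _ _ (CV_radius_inside _ _ (vcoef_derive_inside x_in)).
have G := PSeries_correct _ _ (CV_radius_inside _ _ (vcoef_inside x_in)).
have lhs := is_pseries_minus _ _ _ _ _ G'
  (is_pseries_scal 4 _ _ _ (Rmult_comm _ _) (is_pseries_incr_1 _ _ _ G')).
have rhs := is_pseries_scal 10 _ _ _ (Rmult_comm _ _) G.
have := is_pseries_unique _ _ _ rhs.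
rewrite (is_pseries_unique _ _ _ (is_pseries_ext _ _ _ _ vcoef_ode_coef lhs)).
by rewrite /plus /opp /scal /mult /= /mult /=; lra.
Qed.

(* The integrating factor (1 - 4t)^(5/2) of the differential equation. *)
Definition weight (t : R) : R := (1 - 4 * t) ^ 2 * sqrt (1 - 4 * t).

Lemma weight_derive c :
  c < / 4 -> is_derive weight c (-10 * (1 - 4 * c) * sqrt (1 - 4 * c)).
Proof.
move=> c_lt; rewrite /weight; auto_derive; first lra.
have u_gt0 : 0 < 1 - 4 * c by lra.
rewrite (_ : 1 + - (4 * c) = 1 - 4 * c); last ring.
have := sqrt_sqrt _ (Rlt_le _ _ u_gt0); have := sqrt_lt_R0 _ u_gt0.
move: (sqrt (1 - 4 * c)) => s s_gt0 s_sq; rewrite -s_sq; field; lra.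
Qed.

Lemma weighted_series_derive c :
  Rabs c < / 4 -> is_derive (fun t => PSeries vcoef t * weight t) c 0.
Proof.
move=> c_in.
have c_lt : c < / 4 by move: c_in; rewrite /Rabs; case: Rcase_abs; lra.
have := is_derive_mult _ _ _ _ _ (is_derive_PSeries vcoef c (vcoef_inside c_in))
  (weight_derive c_lt) (fun u v => Rmult_comm u v).
congr is_derive; rewrite /plus /mult /= /weight.
rewrite (_ : PSeries (PS_derive vcoef) c * ((1 - 4 * c) ^ 2 * sqrt (1 - 4 * c))
             = ((1 - 4 * c) * PSeries (PS_derive vcoef) c) * ((1 - 4 * c) * sqrt (1 - 4 * c)));
  last ring.
by rewrite vcoef_ode //; ring.
Qed.

Lemma weighted_series_const x : Rabs x < / 4 -> PSeries vcoef x * weight x = 2.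
Proof.
move=> x_in.
have [c [const _]] := MVT_cor4 (fun t => PSeries vcoef t * weight t) (fun _ => 0) 0 (Rabs x)
  ltac:(move=> c; rewrite Rminus_0_r => c_in; apply: weighted_series_derive; lra)
  x ltac:(rewrite Rminus_0_r; lra).
move: const; rewrite PSeries_0 vcoef0 /weight Rmult_0_r Rminus_0_r sqrt_1; lra.
Qed.

Lemma closed_form_simplify x s :
  0 < s -> s * s = 1 - 4 * x ->
  x * (2 / ((1 - 4 * x) ^ 2 * s))
  = (8 * x * (1 + s - x * (3 + s))) / ((1 - 4 * x) * (1 - 4 * x + s) ^ 3).
Proof.
move=> s_gt0 s_sq.
rewrite -s_sq (_ : x = (1 - s * s) / 4); last lra.
field; nra.
Qed.

Lemma Vb_series x : Rabs x < / 4 ->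
  is_series (fun n : nat => INR (Vb n) * x ^ n)
    ((8 * x * (1 + sqrt (1 - 4 * x) - x * (3 + sqrt (1 - 4 * x))))
     / ((1 - 4 * x) * (1 - 4 * x + sqrt (1 - 4 * x)) ^ 3)).
Proof.
move=> x_in.
have u_gt0 : 0 < 1 - 4 * x by move: x_in; rewrite /Rabs; case: Rcase_abs; lra.
have s_gt0 := sqrt_lt_R0 _ u_gt0.
have s_sq := sqrt_sqrt _ (Rlt_le _ _ u_gt0).
have G_val : PSeries vcoef x = 2 / ((1 - 4 * x) ^ 2 * sqrt (1 - 4 * x)).
  rewrite -(weighted_series_const x_in) /weight; field; split; nra.
rewrite -closed_form_simplify // -G_val.
have := is_pseries_incr_1 _ _ _ (PSeries_correct _ _ (CV_radius_inside _ _ (vcoef_inside x_in))).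
apply: is_series_ext => -[|n]; rewrite /PS_incr_1 pow_n_pow /scal /= /mult /= /zero /=.
- by rewrite Vb0 /=; ring.
- by rewrite /vcoef; ring.
Qed.

Theorem proposition6p4 :
  (forall n : nat,
     (Vb n =
       (2 * xmul Vb n
        + 2 * xmul (xmul (fmul Mb Vc)) n
        + 2 * xmul (xmul (fmul Mc Vb)) n
        + 2 * xmul (xmul (fmul Vc (dx_x Mc))) n
        + 2 * xmul Nb n
        + 2 * xmul (dx_x Nc) n))%nat)
  /\
  (forall x : R, (Rabs x < / 4)%R ->
     is_series (fun n : nat => (INR (Vb n) * x ^ n)%R)
       ((8 * x * (1 + sqrt (1 - 4 * x) - x * (3 + sqrt (1 - 4 * x))))
        / ((1 - 4 * x) * (1 - 4 * x + sqrt (1 - 4 * x)) ^ 3))%R).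
Proof.
split.
- exact: Vb_functional_equation.
- exact: Vb_series.
Qed.
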